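(* Let $K=\mathbb{F}_{p^h}$, $p$ prime, and let $\sigma:K\to K$, $k\mapsto k^{p^r}$, for some $r\in\{1,\dots,h-1\}$; let $n=h/\gcd(r,h)$ be the order of $\sigma$ and $q=p^{\gcd(r,h)}$, so that $\mathrm{Fix}(\sigma)\cong\mathbb{F}_q$. (i) If $n\in\{2,3\}$, then $f(t)=t^n-a\in K[t;\sigma]$ is irreducible if and only if $a\in K\setminus\mathrm{Fix}(\sigma)$. (ii) If $n$ is a prime and $n\mid(q-1)$, then $f(t)=t^n-a\in K[t;\sigma]$ is irreducible if and only if $a\in K\setminus\mathrm{Fix}(\sigma)$. In both cases (i) and (ii), there are precisely $p^h-q$ irreducible polynomials in $K[t;\sigma]$ of the form $t^n-a$ with $a\in K$.
   Context: $K[t;\sigma]$ is the skew polynomial ring over $K$ with $tk=\sigma(k)t$. $\mathrm{Fix}(\sigma)=\{k\in K:\sigma(k)=k\}$. A polynomial is irreducible if it is not a unit and has no factorization $f=gh$ with $\deg g,\deg h<\deg f$. *)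

From HB Require Import structures.
From mathcomp Require Import all_boot all_order all_algebra all_field.
Set Implicit Arguments. Unset Strict Implicit. Unset Printing Implicit Defensive.
Import GRing.Theory.
Local Open Scope ring_scope.

(* Skew polynomial ring K[t; sigma] with t k = sigma(k) t.  Elements are
   represented by their coefficient sequences, i.e. by {poly K}
   (f = \sum_i f`_i t^i, coefficients on the left); the additive structure
   is that of {poly K}, and the multiplication is the skew one:
   (\sum a_i t^i)(\sum b_j t^j) = \sum_{i,j} a_i sigma^i(b_j) t^(i+j). *)
Definition skew_mul (K : nzRingType) (sigma : K -> K) (f g : {poly K}) : {poly K} :=
  \poly_(k < (size f + size g).-1)
     \sum_(i < k.+1) f`_i * iter i sigma (g`_(k - i)).

Definition skew_unit (K : nzRingType) (sigma : K -> K) (f : {poly K}) : Prop :=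
  exists g : {poly K}, skew_mul sigma f g = 1 /\ skew_mul sigma g f = 1.

(* irreducible: not a unit and no factorization f = g h with
   deg g, deg h < deg f (degree comparison via size = deg + 1, the zero
   polynomial having size 0 / degree -oo). *)
Definition skew_irreducible (K : nzRingType) (sigma : K -> K) (f : {poly K}) : Prop :=
  ~ skew_unit sigma f /\
  forall g h : {poly K}, f = skew_mul sigma g h ->
    ~ ((size g < size f)%N /\ (size h < size f)%N).

Definition frobp (K : nzRingType) (p r : nat) (k : K) : K := k ^+ (p ^ r).

From HB Require Import structures.
From mathcomp Require Import all_boot all_order all_algebra all_field.
From mathcomp Require Import zify.
Set Implicit Arguments.
Unset Strict Implicit.
Unset Printing Implicit Defensive.
Import GRing.Theory.
Local Open Scope ring_scope.

(* If a = N(b) := b sigma(b) ... sigma^(n-1)(b) is a skew norm, then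
   t^n - a = (\sum_(k < n) sigma^(k+1)(b) ... sigma^(n-1)(b) t^k) (t - b) is reducible.
   On K = F_(p^h), sigma and x |-> x^q generate the same cyclic group of order n,
   so N(b) = b^(1 + q + ... + q^(n-1)); counting the fibres of this power map shows
   that it maps K^* onto the (q-1)-th roots of unity, which are the nonzero points of
   Fix(sigma), so every fixed a is a norm and |Fix(sigma)| = q.
   Conversely, let g h = t^n - a with 0 < deg h < n.  As t^n is central,
   (t^n - h g) h = h a, so by degrees t^n - h g is a constant c; comparing constant
   and leading coefficients gives c = a = sigma^(deg h)(a), whence sigma(a) = a
   because n is prime. *)

Lemma iter_modn T (f : T -> T) n k x :
  iter n f x = x -> iter k f x = iter (k %% n) f x.
Proof. by move=> fx; rewrite {1}(divn_eq k n) addnC iterD iterM (iter_fix _ fx). Qed.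

Lemma iter_coprime_fix T (f : T -> T) k n x :
  coprime k n -> iter k f x = x -> iter n f x = x -> f x = x.
Proof.
case: n => [|n] kn fk fn; first by move: kn fk; rewrite /coprime gcdn0 => /eqP->.
have [u _] := Bezoutl k (ltn0Sn n); rewrite gcdnC (eqnP kn) => /dvdnP[c def_c].
transitivity (iter (1 + u * k) f x); first by rewrite iterD iterM (iter_fix _ fk).
by rewrite def_c iterM (iter_fix _ fn).
Qed.

Lemma iter_expr (R : pzSemiRingType) m j (x : R) :
  iter j (fun y => y ^+ m) x = x ^+ (m ^ j).
Proof. by elim: j => [|j IHj] /=; rewrite ?expr1 // IHj -exprM expnSr. Qed.

Lemma eqn_modMr_coprime k n i j :
  coprime k n -> (i * k == j * k %[mod n]) = (i == j %[mod n]).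
Proof.
move=> kn; wlog le_ij : i j / (i <= j)%N => [IH|].
  by case: (leqP i j) => [/IH //|/ltnW/IH]; rewrite eq_sym => ->; rewrite eq_sym.
rewrite eq_sym [RHS]eq_sym !eqn_mod_dvd ?leq_mul2r ?le_ij ?orbT // -mulnBl.
by rewrite Gauss_dvdl // coprime_sym.
Qed.

Section IterRMorphism.
Variables (R : pzSemiRingType) (s : {rmorphism R -> R}).

Lemma iter_rmorphism_is_nmod_morphism i : nmod_morphism (iter i s).
Proof. by split=> [|x y]; elim: i => //= i ->; rewrite ?rmorph0 ?rmorphD. Qed.

Lemma iter_rmorphism_is_monoid_morphism i : monoid_morphism (iter i s).
Proof. by split=> [|x y]; elim: i => //= i ->; rewrite ?rmorph1 ?rmorphM. Qed.

HB.instance Definition _ i := GRing.isNmodMorphism.Build R R (iter i s)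
  (iter_rmorphism_is_nmod_morphism i).
HB.instance Definition _ i := GRing.isMonoidMorphism.Build R R (iter i s)
  (iter_rmorphism_is_monoid_morphism i).

End IterRMorphism.

Section FrobeniusPower.
Variables (R : comNzRingType) (p r : nat).
Hypothesis pcharRp : p \in [pchar R].

Lemma frobp_is_nmod_morphism : nmod_morphism (frobp (K := R) p r).
Proof.
split=> [|x y]; rewrite /frobp.
  by rewrite expr0n expn_eq0 (gtn_eqF (prime_gt0 (pcharf_prime pcharRp))).
by apply: exprDn_pchar; rewrite pnatX (pnatE _ (pcharf_prime pcharRp)) pcharRp.
Qed.

Lemma frobp_is_monoid_morphism : monoid_morphism (frobp (K := R) p r).
Proof. by split=> [|x y]; rewrite /frobp ?expr1n ?exprMn. Qed.

Definition frobp_rmorphism : {rmorphism R -> R} :=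
  HB.pack (frobp (K := R) p r)
    (GRing.isNmodMorphism.Build R R _ frobp_is_nmod_morphism)
    (GRing.isMonoidMorphism.Build R R _ frobp_is_monoid_morphism).

End FrobeniusPower.

Section SkewPolyRing.
Variables (R : nzRingType) (s : {rmorphism R -> R}).
Local Notation "f ** g" := (skew_mul s f g) (at level 40, left associativity).

Lemma coef_skew_mul f g k :
  (f ** g)`_k = \sum_(i < k.+1) f`_i * iter i s g`_(k - i).
Proof.
rewrite coef_poly; case: ltnP => // fg_k; rewrite big1 // => i _.
have [f_i|/(nth_default 0)->] := ltnP i (size f); last by rewrite mul0r.
rewrite (nth_default 0 (_ : size g <= k - i)%N) ?rmorph0 ?mulr0 //.
by have := ltn_ord i; lia.
Qed.

Lemma skew_mulDl f1 f2 g : (f1 + f2) ** g = f1 ** g + f2 ** g.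
Proof.
apply/polyP => k; rewrite coefD !coef_skew_mul -big_split.
by apply: eq_bigr => i _; rewrite coefD mulrDl.
Qed.

Lemma skew_mulDr f g1 g2 : f ** (g1 + g2) = f ** g1 + f ** g2.
Proof.
apply/polyP => k; rewrite coefD !coef_skew_mul -big_split.
by apply: eq_bigr => i _; rewrite coefD rmorphD mulrDr.
Qed.

Lemma skew_mulBl f1 f2 g : (f1 - f2) ** g = f1 ** g - f2 ** g.
Proof.
apply/polyP => k; rewrite coefB !coef_skew_mul -sumrB.
by apply: eq_bigr => i _; rewrite coefB mulrBl.
Qed.

Lemma skew_mulBr f g1 g2 : f ** (g1 - g2) = f ** g1 - f ** g2.
Proof.
apply/polyP => k; rewrite coefB !coef_skew_mul -sumrB.
by apply: eq_bigr => i _; rewrite coefB rmorphB mulrBr.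
Qed.

Lemma skew_mul0l g : 0 ** g = 0.
Proof. by have := skew_mulBl 0 0 g; rewrite !subrr. Qed.

Lemma skew_mul0r f : f ** 0 = 0.
Proof. by have := skew_mulBr f 0 0; rewrite !subrr. Qed.

Lemma skew_mul_suml I (r : seq I) (P : pred I) (F : I -> {poly R}) g :
  (\sum_(i <- r | P i) F i) ** g = \sum_(i <- r | P i) F i ** g.
Proof. by elim/big_rec2: _ => [|i f1 f2 _ <-]; rewrite ?skew_mul0l ?skew_mulDl. Qed.

Lemma skew_mul_sumr I (r : seq I) (P : pred I) (F : I -> {poly R}) f :
  f ** (\sum_(i <- r | P i) F i) = \sum_(i <- r | P i) f ** F i.
Proof. by elim/big_rec2: _ => [|i g1 g2 _ <-]; rewrite ?skew_mul0r ?skew_mulDr. Qed.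

Lemma coef_skew_ZXn_mul c j f k :
  ((c *: 'X^j) ** f)`_k = if (j <= k)%N then c * iter j s f`_(k - j) else 0.
Proof.
rewrite coef_skew_mul; case: leqP => [le_jk|lt_kj].
  rewrite (bigD1 (Ordinal (leq_ltn_trans le_jk (ltnSn k)))) //= big1 => [|i /eqP ne_ij].
    by rewrite coefZ coefXn eqxx mulr1 addr0.
  rewrite coefZ coefXn (_ : (i == j :> nat) = false) ?mulr0 ?mul0r //.
  by apply/negbTE/eqP => eq_ij; apply: ne_ij; exact: val_inj.
rewrite big1 // => i _; rewrite coefZ coefXn.
by rewrite (_ : (i == j :> nat) = false) ?mulr0 ?mul0r //; apply/eqP; have := ltn_ord i; lia.
Qed.

Lemma coef_skew_mul_ZXn f c j k :
  (f ** (c *: 'X^j))`_k = if (j <= k)%N then f`_(k - j) * iter (k - j) s c else 0.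
Proof.
rewrite coef_skew_mul; case: leqP => [le_jk|lt_kj].
  rewrite (bigD1 (Ordinal (leq_ltn_trans (leq_subr j k) (ltnSn k)))) //= big1 => [|i /eqP ne_ij].
    by rewrite coefZ coefXn subKn // eqxx mulr1 addr0.
  rewrite coefZ coefXn (_ : (k - i == j)%N = false) ?mulr0 ?rmorph0 ?mulr0 //.
  by apply/eqP => def_j; apply: ne_ij; apply: val_inj => /=; have := ltn_ord i; lia.
rewrite big1 // => i _; rewrite coefZ coefXn.
by rewrite (_ : (k - i == j)%N = false) ?mulr0 ?rmorph0 ?mulr0 //; apply/eqP; lia.
Qed.

Lemma skew_mul_ZXn a i b j :
  (a *: 'X^i) ** (b *: 'X^j) = (a * iter i s b) *: 'X^(i + j).
Proof.
apply/polyP => k; rewrite coef_skew_ZXn_mul !coefZ !coefXn.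
case: leqP => [le_ik|lt_ki]; last by rewrite (_ : (k == i + j)%N = false) ?mulr0 //; apply/eqP; lia.
rewrite (_ : (k - i == j)%N = (k == i + j)%N); last by apply/eqP/eqP; lia.
by rewrite rmorphM rmorph_nat mulrA.
Qed.

Lemma skew_mulA f g h : f ** g ** h = f ** (g ** h).
Proof.
rewrite -[f]coefK poly_def !skew_mul_suml; apply: eq_bigr => i _.
rewrite -[g]coefK poly_def skew_mul_sumr !skew_mul_suml skew_mul_sumr.
apply: eq_bigr => j _; rewrite -[h]coefK poly_def !skew_mul_sumr; apply: eq_bigr => l _.
by rewrite !skew_mul_ZXn rmorphM iterD addnA mulrA.
Qed.

Lemma skew_polyC_mul c f : c%:P ** f = c *: f.
Proof.
apply/polyP => k; rewrite -[c%:P]alg_polyC -[1](expr0 'X) coef_skew_ZXn_mul.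
by rewrite coefZ subn0.
Qed.

Lemma coef_skew_mul_polyC f c k : (f ** c%:P)`_k = f`_k * iter k s c.
Proof. by rewrite -[c%:P]alg_polyC -[1](expr0 'X) coef_skew_mul_ZXn subn0. Qed.

Lemma skew_mulXn_comm n f : (forall x, iter n s x = x) -> 'X^n ** f = f ** 'X^n.
Proof.
move=> sn; apply/polyP => k; rewrite -['X^n]scale1r.
by rewrite coef_skew_ZXn_mul coef_skew_mul_ZXn sn rmorph1 mul1r mulr1.
Qed.

Lemma coef_skew_mul_lead f g :
  (f ** g)`_((size f).-1 + (size g).-1) = lead_coef f * iter (size f).-1 s (lead_coef g).
Proof.
have lt_df : ((size f).-1 < ((size f).-1 + (size g).-1).+1)%N by rewrite ltnS leq_addr.
rewrite coef_skew_mul (bigD1 (Ordinal lt_df)) //=.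
rewrite addKn big1 ?addr0 // => i /eqP ne_i.
have [f_i|/(nth_default 0)->] := ltnP i (size f); last by rewrite mul0r.
have {}ne_i : i <> (size f).-1 :> nat by move=> eq_i; apply: ne_i; exact: val_inj.
have le_g : (size g <= (size f).-1 + (size g).-1 - i)%N by lia.
by rewrite (nth_default 0 le_g) rmorph0 mulr0.
Qed.

End SkewPolyRing.

Section SkewPolyField.
Variables (K : fieldType) (s : {rmorphism K -> K}).
Local Notation "f ** g" := (skew_mul s f g) (at level 40, left associativity).

Lemma size_skew_mul f g : f != 0 -> g != 0 -> size (f ** g) = (size f + size g).-1.
Proof.
move=> f0 g0; have lead_neq0 : (f ** g)`_((size f).-1 + (size g).-1) != 0.
  by rewrite coef_skew_mul_lead mulf_neq0 ?fmorph_eq0 ?lead_coef_eq0.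
have lt_lead : ((size f).-1 + (size g).-1 < size (f ** g))%N.
  by rewrite ltnNge; apply: contra lead_neq0 => /(nth_default 0)->.
have le_size : (size (f ** g) <= (size f + size g).-1)%N := size_poly _ _.
by move: f0 g0; rewrite -!size_poly_gt0; lia.
Qed.

Lemma size_skew_unit f : skew_unit s f -> size f = 1%N.
Proof.
case=> g [fg _]; have fg0 : f ** g != 0 by rewrite fg oner_neq0.
have f0 : f != 0 by apply: contraNneq fg0 => ->; rewrite skew_mul0l.
have g0 : g != 0 by apply: contraNneq fg0 => ->; rewrite skew_mul0r.
have := size_skew_mul f0 g0; rewrite fg size_poly1.
by move: f0 g0; rewrite -!size_poly_gt0; lia.
Qed.

Lemma skew_factor_XnsubC_fixed n (a : K) g h :
    (0 < n)%N -> (forall x, iter n s x = x) -> a != 0 ->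
  g ** h = 'X^n - a%:P -> iter (size h).-1 s a = a.
Proof.
move=> n_gt0 sn a0 gh.
have h0_neq0 : h`_0 != 0.
  apply: contra a0 => /eqP h0_eq0; have := congr1 (fun f : {poly K} => f`_0) gh.
  rewrite /= coef_skew_mul big_ord1 h0_eq0 mulr0 coefB coefXn coefC ltn_eqF //= sub0r.
  by move/eqP; rewrite eq_sym oppr_eq0.
have h0 : h != 0 by apply: contraNneq h0_neq0 => ->; rewrite coef0.
(* Since X^n is central, (X^n - h g) h = h X^n - h (g h) = h a. *)
set e := 'X^n - h ** g.
have eh : e ** h = h ** a%:P.
  by rewrite skew_mulBl skew_mulA gh skew_mulBr skew_mulXn_comm // opprB addrC subrK.
have ha0 : h ** a%:P != 0.
  apply: contraNneq h0_neq0 => /(congr1 (fun f : {poly K} => f`_0))/eqP.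
  by rewrite coef_skew_mul_polyC coef0 /= mulf_eq0 (negbTE a0) orbF.
have e0 : e != 0 by apply: contraNneq ha0 => e0; rewrite -eh e0 skew_mul0l.
have [c def_e] : exists c, e = c%:P.
  exists e`_0; apply: size1_polyC.
  have := size_skew_mul e0 h0; rewrite eh size_skew_mul ?polyC_eq0 // size_polyC a0.
  by move: h0; rewrite -size_poly_gt0; lia.
have coef_eh k : c * h`_k = h`_k * iter k s a.
  by rewrite -coef_skew_mul_polyC -eh def_e skew_polyC_mul coefZ.
have ca : c = a by apply: (mulIf h0_neq0); rewrite coef_eh mulrC.
have lead_neq0 : h`_(size h).-1 != 0 by rewrite -lead_coefE lead_coef_eq0.
by apply: (mulfI lead_neq0); rewrite -coef_eh ca mulrC.
Qed.

Definition skew_norm n b := \prod_(0 <= j < n) iter j s b.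

Lemma skew_mul_XsubC_norm n b : (0 < n)%N ->
  (\poly_(k < n) \prod_(k.+1 <= j < n) iter j s b) ** ('X - b%:P) =
  'X^n - (skew_norm n b)%:P.
Proof.
move=> n_gt0; have -> : 'X - b%:P = 1 *: 'X^1 - b *: 'X^0.
  by rewrite scale1r expr1 expr0 alg_polyC.
apply/polyP => k; rewrite skew_mulBr coefB !coef_skew_mul_ZXn !coef_poly.
rewrite coefB coefXn coefC subn0; case: k => [|k].
  rewrite ltnn leqnn n_gt0 eqxx (ltn_eqF n_gt0) /skew_norm [in RHS]big_ltn //.
  by rewrite mulrC mulr0n !sub0r.
rewrite ltn0Sn subSS subn0 rmorph1 mulr1; case: (ltngtP k.+1 n) => [lt_kn|lt_nk|<-].
- by rewrite ltnW // big_ltn // mulrC subrr subr0.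
- by rewrite mul0r /= !subr0.
- by rewrite big_geq // mul0r /= !subr0.
Qed.

Lemma skew_reducible_XnsubC_norm n b :
  (1 < n)%N -> ~ skew_irreducible s ('X^n - (skew_norm n b)%:P).
Proof.
move=> n_gt1 [_ irr]; have n_gt0 := ltnW n_gt1.
apply: (irr _ _ (esym (skew_mul_XsubC_norm b n_gt0))).
by rewrite size_XnsubC // size_XsubC; split; [exact: size_poly | rewrite ltnS].
Qed.

Lemma skew_irreducible_XnsubC n a :
  prime n -> (forall x, iter n s x = x) -> s a != a -> skew_irreducible s ('X^n - a%:P).
Proof.
move=> n_pr sn sa; have n_gt0 := prime_gt0 n_pr.
split=> [/size_skew_unit|g h gh [lt_g lt_h]].
  by rewrite size_XnsubC // => -[n0]; rewrite n0 in n_gt0.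
have a0 : a != 0 by apply: contraNneq sa => ->; rewrite rmorph0.
have gh0 : g ** h != 0 by rewrite -gh -size_poly_eq0 size_XnsubC.
have g0 : g != 0 by apply: contraNneq gh0 => ->; rewrite skew_mul0l.
have h0 : h != 0 by apply: contraNneq gh0 => ->; rewrite skew_mul0r.
have := size_skew_mul g0 h0; rewrite -gh size_XnsubC // in lt_g lt_h * => size_gh.
have deg_h_gt0 : (0 < (size h).-1)%N by lia.
have deg_h_lt : ((size h).-1 < n)%N by lia.
move/eqP: sa; apply; apply: (@iter_coprime_fix _ _ (size h).-1 n) => //.
- by rewrite coprime_sym prime_coprime // gtnNdvd.
- exact: skew_factor_XnsubC_fixed n_gt0 sn a0 (esym gh).
Qed.

End SkewPolyField.

Section FinFieldUnityRoots.
Variable F : finFieldType.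

Lemma card_exprn_eq_le n (c : F) : (0 < n)%N -> (#|[set x : F | x ^+ n == c]| <= n)%N.
Proof.
move=> n_gt0; rewrite cardE -ltnS -(size_XnsubC c n_gt0) max_poly_roots ?enum_uniq //.
  by rewrite -size_poly_eq0 size_XnsubC.
by apply/allP => x; rewrite mem_enum inE rootE !hornerE subr_eq0.
Qed.

Lemma expf_card_pred (x : F) : x != 0 -> x ^+ #|F|.-1 = 1.
Proof.
move=> x0; apply: (mulIf x0); rewrite mul1r -exprSr prednK ?expf_card //.
exact: ltnW (finNzRing_gt1 F).
Qed.

Lemma expf_cardX (x : F) k : x ^+ (#|F| ^ k) = x.
Proof. by elim: k => [|k IHk]; rewrite ?expr1 // expnSr exprM IHk expf_card. Qed.

Variables m d : nat.
Hypothesis cardF : #|F|.-1 = (m * d)%N.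

Let md_gt0 : (0 < m * d)%N.
Proof. by rewrite -cardF ltn_predRL finNzRing_gt1. Qed.
Let m_gt0 : (0 < m)%N. Proof. by move: md_gt0; rewrite muln_gt0 => /andP[]. Qed.
Let d_gt0 : (0 < d)%N. Proof. by move: md_gt0; rewrite muln_gt0 => /andP[]. Qed.

Lemma card_exprn_image_ge : (m <= #|[set x ^+ d | x in [set~ (0 : F)%R]]|)%N.
Proof.
rewrite -(leq_pmul2r d_gt0) -cardF -(cardsC1 (0 : F)) -sum1_card.
rewrite (partition_big_imset (fun x => x ^+ d)) -sum_nat_const leq_sum // => y _.
rewrite sum1dep_card (leq_trans _ (card_exprn_eq_le y d_gt0)) // subset_leq_card //.
by apply/subsetP => x; rewrite !inE => /andP[].
Qed.

Lemma exprn_image_unity_roots :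
  [set x ^+ d | x in [set~ (0 : F)]] = [set y : F | y ^+ m == 1].
Proof.
apply/eqP; rewrite eqEcard (leq_trans (card_exprn_eq_le 1 m_gt0) card_exprn_image_ge).
apply/andP; split=> //; apply/subsetP => y /imsetP[x]; rewrite !inE => x0 ->.
by rewrite -exprM mulnC -cardF expf_card_pred.
Qed.

Lemma card_unity_roots : #|[set y : F | y ^+ m == 1]| = m.
Proof.
apply/eqP; rewrite eqn_leq card_exprn_eq_le //.
by rewrite -exprn_image_unity_roots card_exprn_image_ge.
Qed.

End FinFieldUnityRoots.

Section FiniteFieldFrobenius.
Variables (p h r : nat) (K : finFieldType).
Hypotheses (p_pr : prime p) (cardK : #|K| = (p ^ h)%N) (h_gt0 : (0 < h)%N).

Local Notation g := (gcdn r h).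
Local Notation n := (h %/ gcdn r h)%N.
Local Notation q := (p ^ gcdn r h)%N.
Local Notation sigma := (frobp (K := K) p r).
Local Notation tau := (fun x : K => x ^+ q).

Let sigmaR : {rmorphism K -> K} := frobp_rmorphism r (card_finPcharP cardK p_pr).

Let g_gt0 : (0 < g)%N. Proof. by rewrite gcdn_gt0 h_gt0 orbT. Qed.
Let n_gt0 : (0 < n)%N. Proof. by rewrite divn_gt0 // dvdn_leq // dvdn_gcdr. Qed.
Let q_gt1 : (1 < q)%N. Proof. by rewrite -{1}(expn0 p) ltn_exp2l ?prime_gt1. Qed.

Let coprime_r_n : coprime (r %/ g) n.
Proof.
by rewrite /coprime -(eqn_pmul2r g_gt0) mul1n muln_gcdl !divnK ?dvdn_gcdl ?dvdn_gcdr.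
Qed.

Let cardK_pred : #|K|.-1 = (q.-1 * \sum_(i < n) q ^ i)%N.
Proof. by rewrite -predn_exp -expnM mulnC divnK ?dvdn_gcdr ?cardK. Qed.

Lemma iter_frobp_period x : iter n sigma x = x.
Proof. by rewrite iter_expr -expnM muln_divCA_gcd expnM -cardK expf_cardX. Qed.

Lemma iter_qpow_period x : iter n tau x = x.
Proof. by rewrite iter_expr -expnM mulnC divnK ?dvdn_gcdr // -cardK expf_card. Qed.

Lemma frobp_iter_qpow x : sigma x = iter (r %/ g) tau x.
Proof. by rewrite iter_expr -expnM mulnC divnK ?dvdn_gcdl. Qed.

Lemma frobp_fixedE x : (sigma x == x) = (x ^+ q == x).
Proof.
apply/eqP/eqP => [sx|qx]; last by rewrite frobp_iter_qpow iter_fix.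
apply: (@iter_coprime_fix _ tau _ _ _ coprime_r_n); last exact: iter_qpow_period.
by rewrite -frobp_iter_qpow.
Qed.

Lemma frobp_fixed_set : [set x : K | sigma x == x] = 0 |: [set y : K | y ^+ q.-1 == 1].
Proof.
apply/setP => x; rewrite !inE frobp_fixedE; have [->|x0] := eqVneq x 0.
  by rewrite expr0n gtn_eqF ?eqxx // ltnW.
rewrite -{1}(prednK (ltnW q_gt1)) exprSr -subr_eq0 -[X in _ - X]mul1r -mulrBl.
by rewrite mulf_eq0 (negbTE x0) orbF subr_eq0.
Qed.

Lemma card_frobp_fixed : #|[set x : K | sigma x == x]| = q.
Proof.
rewrite frobp_fixed_set cardsU1 (card_unity_roots cardK_pred) inE expr0n.
by rewrite -(subnKC q_gt1) eq_sym oner_eq0.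
Qed.

Lemma skew_norm_frobp b : skew_norm sigmaR n b = b ^+ (\sum_(i < n) q ^ i).
Proof.
pose rk (j : 'I_n) := Ordinal (ltn_pmod (j * (r %/ g)) n_gt0).
have rk_inj : injective rk.
  move=> i j /(congr1 val)/eqP; rewrite /= eqn_modMr_coprime // !modn_small //.
  by move/eqP/val_inj.
rewrite /skew_norm big_mkord -prodrXr [RHS](reindex_inj rk_inj) /=.
apply: eq_bigr => j _.
by rewrite (eq_iter frobp_iter_qpow) -iterM (iter_modn _ (iter_qpow_period b)) iter_expr.
Qed.

Lemma frobp_fixed_skew_norm a : sigma a = a -> exists b, skew_norm sigmaR n b = a.
Proof.
move=> /eqP sa; have : a \in 0 |: [set y : K | y ^+ q.-1 == 1] by rewrite -frobp_fixed_set inE.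
case/setU1P=> [->|]; first by exists 0; rewrite /skew_norm big_ltn // mul0r.
rewrite -(exprn_image_unity_roots cardK_pred) => /imsetP[b _ ->].
by exists b; exact: skew_norm_frobp.
Qed.

Lemma skew_irreducible_frobp_XnsubC a :
  prime n -> skew_irreducible sigma ('X^n - a%:P) <-> sigma a != a.
Proof.
move=> n_pr; split=> [irr|].
  apply/negP => /eqP /frobp_fixed_skew_norm [b def_a].
  apply: (skew_reducible_XnsubC_norm (s := sigmaR) (b := b) (prime_gt1 n_pr)).
  by rewrite def_a.
exact: (skew_irreducible_XnsubC (s := sigmaR) n_pr iter_frobp_period).
Qed.

End FiniteFieldFrobenius.

Theorem mainTheorem17 (p h r : nat) (K : finFieldType)
  (hp : prime p) (hK : #|K| = (p ^ h)%N) (hr1 : (1 <= r)%N) (hrh : (r <= h.-1)%N) :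
  let sigma := frobp (K := K) p r in
  let n := (h %/ gcdn r h)%N in
  let q := (p ^ gcdn r h)%N in
  ((n = 2%N \/ n = 3%N) \/ (prime n /\ (n %| q.-1)%N)) ->
  (forall a : K, skew_irreducible sigma ('X^n - a%:P) <-> sigma a != a) /\
  (exists s : seq {poly K},
     uniq s /\
     (forall f : {poly K},
        f \in s <-> ((exists a : K, f = 'X^n - a%:P) /\ skew_irreducible sigma f)) /\
     size s = (p ^ h - q)%N).
Proof.
move=> sigma n q n_cases; have n_pr : prime n by case: n_cases => [[->|->]|[]].
have h_gt0 : (0 < h)%N by lia.
have irrE a : skew_irreducible sigma ('X^n - a%:P) <-> sigma a != a.
  exact: skew_irreducible_frobp_XnsubC.
split=> //; exists [seq 'X^n - a%:P | a <- enum [set a | sigma a != a]].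
split; [|split].
- by rewrite map_inj_uniq ?enum_uniq // => a b /addrI/oppr_inj/polyC_inj.
- move=> f; split=> [/mapP[a]|[[a ->] /irrE sa]]; last by apply: map_f; rewrite mem_enum inE.
  by rewrite mem_enum inE => /irrE irr ->; split; first exists a.
rewrite size_map -cardE (_ : [set a | sigma a != a] = ~: [set a | sigma a == a]).
  by rewrite cardsCs setCK (card_frobp_fixed r hp hK h_gt0) hK.
by apply/setP => a; rewrite !inE.
Qed.
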